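(* Let $\ell$ be a positive integer and let $r_i=(a_i,b_i,c_i,d_i)\in\mathbb{Z}^4$, $i=1,2,3,4$, satisfy $a_ia_j+b_ib_j+c_ic_j+d_id_j=\delta_{ij}\ell$ for all $i,j\in\{1,2,3,4\}$. Let $D_i=\gcd(a_i,b_i,c_i,d_i)$ and assume $\gcd(D_1,D_2,D_3,D_4)=1$. For $1\le i<j\le 4$ let $\zeta_{ij}$ be the greatest common divisor of all $2\times2$ minors of the matrix $\begin{pmatrix} a_i & b_i & c_i & d_i\\ a_j & b_j & c_j & d_j\end{pmatrix}$. Let $H=\{\sum_{i=1}^4 s_ir_i: s_i\in[0,1]\}$ and write its Ehrhart polynomial as $E_{H}(t)=\ell^2t^4+\alpha_1t^3+\alpha_2t^2+\alpha_3t+1$. Then $$\alpha_2=\alpha_3+\delta-\Delta,$$ where $\delta=\sum_{1\le i<j\le 4}\zeta_{ij}$ and $\Delta=D_1+D_2+D_3+D_4$.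
   Context: $\delta_{ij}$ is the Kronecker delta. The Ehrhart polynomial $E_H$ is the polynomial with $E_H(t)=\#(tH\cap\mathbb{Z}^4)$ for all positive integers $t$. *)

From HB Require Import structures.
From mathcomp Require Import all_boot all_order all_algebra.
From mathcomp Require Import reals.
Set Implicit Arguments. Unset Strict Implicit. Unset Printing Implicit Defensive.
Import Order.TTheory GRing.Theory Num.Theory.
Local Open Scope ring_scope.

(* The four vectors r_1..r_4 are the rows r i of a 4x4 integer matrix r;
   r i k is the k-th coordinate (a_i, b_i, c_i, d_i). *)

Definition Dgcd (r : 'M[int]_4) (i : 'I_4) : int :=
  foldr gcdz 0 [seq r i k | k <- enum 'I_4].

Definition minor2 (r : 'M[int]_4) (i j k l : 'I_4) : int :=
  r i k * r j l - r i l * r j k.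

Definition zeta (r : 'M[int]_4) (i j : 'I_4) : int :=
  foldr gcdz 0 [seq minor2 r i j kl.1 kl.2 |
                kl : 'I_4 * 'I_4 <- [seq (k, l) | k <- enum 'I_4, l <- enum 'I_4]
                & (kl.1 < kl.2)%N].

Definition in_dilate (R : realType) (r : 'M[int]_4) (t : nat) (x : 'rV[int]_4) : Prop :=
  exists s : 'I_4 -> R, (forall i, 0 <= s i <= 1) /\
    forall k : 'I_4, (x ord0 k)%:~R = t%:R * \sum_(i < 4) s i * (r i k)%:~R.

Definition has_card (P : 'rV[int]_4 -> Prop) (n : nat) : Prop :=
  exists s : seq 'rV[int]_4, uniq s /\ (forall x, x \in s <-> P x) /\ size s = n.

(* Since the rows r_i of [r] are pairwise orthogonal of squared norm l, the map
   x |-> (<x, r_i>)_i sends the lattice points of tH bijectively onto the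
   y in [0, tl]^4 such that l divides sum_i y_i r_i.  Writing every nonzero y_i as
   q_i l + a_i + 1 with q_i < t and a_i < l, this condition only depends on the
   residues a_i and on which y_i vanish, so that
     E_H(t) = sum_z [l | sum_i z_i r_i] t^#(supp z),   z ranging over {0, .., l}^4.
   The coefficient of t therefore counts the a in [1, l] with l | a r_i, and there
   are D_i of them because D_i^2 divides |r_i|^2 = l.  The coefficient of t^2 counts
   the pairs (a, b) with l | a r_i + b r_j; through the Smith normal form of the
   2 x 4 matrix with rows r_i, r_j there are zeta_ij of them, because zeta_ij^2
   divides l^2 by Lagrange's identity.  Hence alpha_3 = Delta and alpha_2 = delta. *)

From HB Require Import structures.
From mathcomp Require Import all_boot all_order all_algebra.
From mathcomp Require Import reals.
From mathcomp Require Import ring lra.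
Set Implicit Arguments. Unset Strict Implicit. Unset Printing Implicit Defensive.
Import Order.TTheory GRing.Theory Num.Theory.

Definition osupp_size (I T : finType) (z : {ffun I -> option T}) : nat :=
  \sum_i (z i != None : nat).

Section OptionFibers.
Variables (I A B : finType).

Definition ffun_osnd (z : {ffun I -> option (A * B)}) : {ffun I -> option B} :=
  [ffun i => omap snd (z i)].

Lemma card_ffun_osnd_fiber (z : {ffun I -> option B}) :
  #|[pred z' | ffun_osnd z' == z]| = #|A| ^ osupp_size z.
Proof.
rewrite (@eq_card _ _ (family (fun i => [pred o | omap snd o == z i]))); last first.
  move=> z'; rewrite !inE; apply/eqP/familyP => [<- i|fam_z']; first by rewrite ffunE inE.
  by apply/ffunP => i; rewrite ffunE; apply/eqP; exact: fam_z' i.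
rewrite card_family foldrE big_map big_enum /osupp_size expn_sum; apply: eq_bigr => i _.
case: (z i) => [b|] /=.
  have inj_b : injective (fun a : A => Some (a, b)) by move=> a1 a2 [].
  rewrite -(card_codom inj_b); apply: eq_card => -[[a b']|] /=; last first.
    by rewrite [in LHS]unfold_in /=; apply/esym/negbTE; apply/codomP => -[a].
  rewrite [in LHS]unfold_in /=.
  by apply/eqP/codomP => [[->]|[a' [_ ->]]] //; exists a.
rewrite (@eq_card _ _ (pred1 None)) ?card1 //.
by move=> [[a b']|] /=; rewrite [in LHS]unfold_in !inE.
Qed.

Lemma sum_ffun_osnd (F : {ffun I -> option B} -> nat) :
  \sum_(z' : {ffun I -> option (A * B)}) F (ffun_osnd z') =
  \sum_z F z * #|A| ^ osupp_size z.
Proof.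
rewrite (partition_big ffun_osnd xpredT) //=; apply: eq_bigr => z _.
rewrite (eq_bigr (fun _ => F z)); last by move=> z' /eqP->.
by rewrite sum_nat_const -card_ffun_osnd_fiber mulnC.
Qed.

End OptionFibers.

Lemma sum_pred1_mul (U : finType) (q : U) (G : U -> nat) :
  \sum_(u : U) (u == q : nat) * G u = G q.
Proof.
by rewrite (bigD1 q) //= eqxx mul1n big1 ?addn0 // => u /negbTE ->.
Qed.

Section SupportPatterns.
Variables (I T : finType).
Local Notation Z := {ffun I -> option T}.

Definition ffun_single (i : I) (a : T) : Z :=
  [ffun k => if k == i then Some a else None].

Definition ffun_pair (i j : I) (a b : T) : Z :=
  [ffun k => if k == i then Some a else if k == j then Some b else None].

Lemma sum_supp_single (G : Z -> nat) i :
  \sum_(z : Z) ([forall k, (z k != None) == (k == i)] : nat) * G z =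
  \sum_(a : T) G (ffun_single i a).
Proof.
have supp_i (z : Z) : ([forall k, (z k != None) == (k == i)] : nat) =
    \sum_(a : T) (z == ffun_single i a : nat).
  case: (boolP [forall k, _]) => [/forallP supp_z|supp_z].
    have := supp_z i; rewrite eqxx; case z_i: (z i) => [a0|] // _.
    rewrite (bigD1 a0) //= big1 ?addn0.
      suff -> : z == ffun_single i a0 by [].
      apply/eqP/ffunP => k; rewrite ffunE; case: ifP => [/eqP -> //|k_neq_i].
      by have := supp_z k; rewrite k_neq_i; case: (z k).
    move=> a /negbTE a_neq; apply/eqP; rewrite eqb0; apply/eqP => def_z.
    by move: z_i; rewrite def_z ffunE eqxx => -[a_eq]; rewrite a_eq eqxx in a_neq.
  rewrite big1 // => a _; apply/eqP; rewrite eqb0; apply/eqP => def_z.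
  by move/negP: supp_z; apply; apply/forallP => k; rewrite def_z ffunE; case: (k == i).
rewrite (eq_bigr (fun z => \sum_(a : T) (z == ffun_single i a : nat) * G z)); last first.
  by move=> z _; rewrite supp_i big_distrl.
by rewrite exchange_big; apply: eq_bigr => a _; rewrite sum_pred1_mul.
Qed.

Lemma sum_supp_pair (G : Z -> nat) i j : i != j ->
  \sum_(z : Z) ([forall k, (z k != None) == ((k == i) || (k == j))] : nat) * G z =
  \sum_(a : T) \sum_(b : T) G (ffun_pair i j a b).
Proof.
move=> i_neq_j.
have supp_ij (z : Z) : ([forall k, (z k != None) == ((k == i) || (k == j))] : nat) =
    \sum_(p : T * T) (z == ffun_pair i j p.1 p.2 : nat).
  case: (boolP [forall k, _]) => [/forallP supp_z|supp_z].
    have := supp_z i; rewrite eqxx; case z_i: (z i) => [a0|] // _.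
    have := supp_z j; rewrite eqxx orbT; case z_j: (z j) => [b0|] // _.
    rewrite (bigD1 (a0, b0)) //= big1 ?addn0.
      suff -> : z == ffun_pair i j a0 b0 by [].
      apply/eqP/ffunP => k; rewrite ffunE; case: ifP => [/eqP -> //|k_neq_i].
      case: ifP => [/eqP -> //|k_neq_j].
      by have := supp_z k; rewrite k_neq_i k_neq_j; case: (z k).
    move=> [a b] /negbTE ab_neq; apply/eqP; rewrite eqb0; apply/eqP => def_z.
    move: z_i z_j; rewrite def_z !ffunE eqxx eq_sym (negbTE i_neq_j) eqxx /=.
    by move=> [a_eq] [b_eq]; rewrite a_eq b_eq eqxx in ab_neq.
  rewrite big1 // => p _; apply/eqP; rewrite eqb0; apply/eqP => def_z.
  move/negP: supp_z; apply; apply/forallP => k; rewrite def_z ffunE.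
  by case: (k == i) => //=; case: (k == j).
rewrite (eq_bigr (fun z => \sum_(p : T * T) (z == ffun_pair i j p.1 p.2 : nat) * G z)); last first.
  by move=> z _; rewrite supp_ij big_distrl.
rewrite exchange_big -(pair_bigA _ (fun a b => \sum_z (z == ffun_pair i j a b : nat) * G z)) /=.
by apply: eq_bigr => a _; apply: eq_bigr => b _; rewrite sum_pred1_mul.
Qed.

End SupportPatterns.

Local Notation o0 := (@Ordinal 4 0 isT).
Local Notation o1 := (@Ordinal 4 1 isT).
Local Notation o2 := (@Ordinal 4 2 isT).
Local Notation o3 := (@Ordinal 4 3 isT).

Lemma big_ord4 (V : nmodType) (F : 'I_4 -> V) :
  (\sum_(i < 4) F i = F o0 + F o1 + F o2 + F o3)%R.
Proof.
rewrite !big_ord_recr big_ord0 /= GRing.add0r.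
by congr (F _ + F _ + F _ + F _)%R; apply: val_inj.
Qed.

Lemma forall_ord4 (P : 'I_4 -> bool) : [forall k, P k] = [&& P o0, P o1, P o2 & P o3].
Proof.
apply/forallP/and4P => [?|[P0 P1 P2 P3] [[|[|[|[|k]]]] lt_k4]] //.
- by rewrite (_ : Ordinal lt_k4 = o0) //; apply: val_inj.
- by rewrite (_ : Ordinal lt_k4 = o1) //; apply: val_inj.
- by rewrite (_ : Ordinal lt_k4 = o2) //; apply: val_inj.
- by rewrite (_ : Ordinal lt_k4 = o3) //; apply: val_inj.
Qed.

Lemma sum_bool4_eq1 (b : 'I_4 -> bool) :
  ((\sum_i (b i : nat)) == 1 : nat) = \sum_i ([forall k, b k == (k == i)] : nat).
Proof.
rewrite !(@big_ord4 nat) !forall_ord4 /= -!val_eqE /=.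
by case: (b o0); case: (b o1); case: (b o2); case: (b o3).
Qed.

Lemma sum_bool4_eq2 (b : 'I_4 -> bool) :
  ((\sum_i (b i : nat)) == 2 : nat) =
  \sum_(i < 4) \sum_(j < 4 | i < j) ([forall k, b k == ((k == i) || (k == j))] : nat).
Proof.
under [RHS]eq_bigr => i _ do rewrite big_mkcond /=.
rewrite !(@big_ord4 nat) /= !forall_ord4 /= -!val_eqE /=.
by case: (b o0); case: (b o1); case: (b o2); case: (b o3).
Qed.

Lemma sum_osupp_size_eq1 (T : finType) (G : {ffun 'I_4 -> option T} -> nat) :
  \sum_z G z * (osupp_size z == 1) = \sum_i \sum_a G (ffun_single i a).
Proof.
rewrite (eq_bigr (fun z : {ffun 'I_4 -> option T} => \sum_i ([forall k, (z k != None) == (k == i)] : nat) * G z));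
  last by move=> z _; rewrite /osupp_size sum_bool4_eq1 mulnC big_distrl.
by rewrite exchange_big; apply: eq_bigr => i _; rewrite sum_supp_single.
Qed.

Lemma sum_osupp_size_eq2 (T : finType) (G : {ffun 'I_4 -> option T} -> nat) :
  \sum_z G z * (osupp_size z == 2) =
  \sum_(i < 4) \sum_(j < 4 | i < j) \sum_a \sum_b G (ffun_pair i j a b).
Proof.
rewrite (eq_bigr (fun z : {ffun 'I_4 -> option T} => \sum_(i < 4) \sum_(j < 4 | i < j)
    ([forall k, (z k != None) == ((k == i) || (k == j))] : nat) * G z)); last first.
  move=> z _; rewrite /osupp_size sum_bool4_eq2 mulnC big_distrl.
  by apply: eq_bigr => i _; rewrite big_distrl.
rewrite exchange_big; apply: eq_bigr => i _; rewrite exchange_big; apply: eq_bigr => j lt_ij.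
by rewrite sum_supp_pair // neq_ltn lt_ij.
Qed.

Local Open Scope ring_scope.

Lemma foldr_gcdz_dvd (s : seq int) x : x \in s -> (foldr gcdz 0 s %| x)%Z.
Proof.
elim: s => //= y s IH; rewrite in_cons => /orP[/eqP->|/IH xs].
  exact: dvdz_gcdl.
exact: dvdz_trans (dvdz_gcdr _ _) xs.
Qed.

Lemma dvdz_foldr_gcdz (s : seq int) d :
  (forall x, x \in s -> (d %| x)%Z) -> (d %| foldr gcdz 0 s)%Z.
Proof.
elim: s => [|y s IH] dvd_s /=; first exact: dvdz0.
by rewrite dvdz_gcd dvd_s ?mem_head // IH // => x xs; rewrite dvd_s // in_cons xs orbT.
Qed.

Lemma foldr_gcdz_ge0 (s : seq int) : 0 <= foldr gcdz 0 s.
Proof. by case: s. Qed.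

Lemma foldr_gcdz_map_mull (s : seq int) u :
  foldr gcdz 0 [seq u * x | x <- s] = `|u|%:Z * foldr gcdz 0 s.
Proof.
elim: s => [|y s IH] /=; first by rewrite mulr0.
rewrite IH.
have -> : gcdz (u * y) (`|u|%:Z * foldr gcdz 0 s) = gcdz (u * y) (u * foldr gcdz 0 s).
  by rewrite /gcdz !abszM.
by rewrite -mulz_gcdr.
Qed.

Lemma eqz_dvdz_ge0 (a b : int) :
  0 <= a -> 0 <= b -> (a %| b)%Z -> (b %| a)%Z -> a = b.
Proof.
case: a => // a; case: b => // b _ _; rewrite !dvdzE /= => ab ba.
by congr Posz; apply/eqP; rewrite eqn_dvd ab ba.
Qed.

Lemma count_dvdn_ord (m d : nat) :
  (0 < m)%N -> (\sum_(u < d * m) (m %| u : nat))%N = d.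
Proof.
move=> m_gt0; elim: d => [|d IH]; first by rewrite mul0n big_ord0.
rewrite mulSn addnC big_split_ord /= IH.
rewrite (eq_bigr (fun i : 'I_m => (i == 0%N :> nat) : nat)); last first.
  move=> i _; rewrite dvdn_addr ?dvdn_mull //.
  congr nat_of_bool; apply/idP/idP => [i_dvd|/eqP->]; last exact: dvdn0.
  rewrite eqn0Ngt; apply/negP => i_gt0; have := dvdn_leq i_gt0 i_dvd.
  by rewrite leqNgt ltn_ord.
clear IH; case: m m_gt0 => // m _.
by rewrite big_ord_recl /= big1 ?addn0 ?addn1.
Qed.

Lemma count_dvdz_mul (l : nat) (d : int) : (0 < l)%N -> d != 0 -> (d %| l%:Z)%Z ->
  (\sum_(u < l) ((l%:Z %| (u%:Z * d)%R)%Z : nat))%N = `|d|%N.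
Proof.
move=> l_gt0 d_neq0; rewrite dvdzE /= => /dvdnP [m def_l].
have m_gt0 : (0 < m)%N by move: l_gt0; rewrite def_l muln_gt0 => /andP[].
rewrite (eq_bigr (fun u : 'I_l => (m %| u : nat))); last first.
  move=> u _; rewrite dvdzE abszM /=.
  by rewrite [X in (X %| _)%N]def_l dvdn_pmul2r // absz_gt0.
by rewrite def_l mulnC count_dvdn_ord.
Qed.

Lemma count_dvdz_all (l : nat) (s : seq int) : (0 < l)%N ->
  foldr gcdz 0 s != 0 -> (foldr gcdz 0 s %| l%:Z)%Z ->
  (\sum_(u < l) (all (fun x => l%:Z %| (u%:Z * x)%R)%Z s : nat))%N = `|foldr gcdz 0 s|%N.
Proof.
move=> l_gt0 g_neq0 g_dvd; rewrite -(count_dvdz_mul l_gt0 g_neq0 g_dvd).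
apply: eq_bigr => u _; congr nat_of_bool; apply/allP/idP => [dvd_s|dvd_ug x xs].
  rewrite -[u%:Z]/(`|u%:Z|%N%:Z) -foldr_gcdz_map_mull.
  by apply: dvdz_foldr_gcdz => _ /mapP [x xs ->]; apply: dvd_s.
by apply: dvdz_trans dvd_ug _; apply: dvdz_mul (dvdzz _) (foldr_gcdz_dvd xs).
Qed.

Lemma sum_ord_periodic_shift (l : nat) (f : int -> nat) : f l%:Z = f 0 ->
  (\sum_(u < l) f (u%:Z + 1)%R)%N = (\sum_(u < l) f u%:Z)%N.
Proof.
case: l => [|l] f_l; first by rewrite !big_ord0.
rewrite big_ord_recr big_ord_recl /= -f_l addnC; congr (_ + _)%N.
  by rewrite -addn1 PoszD.
by apply: eq_bigr => i _; rewrite /bump /= addnC PoszD.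
Qed.

Section ModuloOrd.
Variable l' : nat.
Local Notation l := l'.+1.

Definition ord_modz (x : int) : 'I_l := inord `|(x %% l%:Z)%Z|%N.

Lemma ord_modzE x : (ord_modz x : nat)%:Z = (x %% l%:Z)%Z.
Proof.
have mod_ge0 : 0 <= (x %% l%:Z)%Z by apply: modz_ge0.
have mod_lt : (x %% l%:Z)%Z < l%:Z by apply: ltz_pmod.
by rewrite /ord_modz inordK ?gez0_abs // -ltz_nat gez0_abs.
Qed.

Lemma dvdz_mul_ord_modz x d : (l%:Z %| x * d)%Z = (l%:Z %| (ord_modz x)%:Z * d)%Z.
Proof.
rewrite ord_modzE {1}(divz_eq x l%:Z) mulrDl -mulrA mulrC -mulrA.
by rewrite (rpredDl _ (dvdz_mulr _ (dvdzz _))) // mulrC.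
Qed.

Lemma ord_modz_eq x y : ord_modz x = ord_modz y -> (l%:Z %| x - y)%Z.
Proof. by move=> eq_xy; rewrite -eqz_mod_dvd -!ord_modzE eq_xy. Qed.

Lemma ord_dvdz_eq (u v : 'I_l) : (l%:Z %| u%:Z - v%:Z)%Z -> u = v.
Proof.
rewrite -eqz_mod_dvd !modz_nat !modn_small // => /eqP [] eq_uv.
exact: val_inj.
Qed.

End ModuloOrd.

Lemma big_ord2 (V : nmodType) (F : 'I_2 -> V) : \sum_(j < 2) F j = F ord0 + F ord_max.
Proof. by rewrite !big_ord_recl big_ord0 addr0; congr (_ + F _); apply: val_inj. Qed.

Definition mxminor2 n (X : 'M[int]_(2, n)) (k m : 'I_n) : int :=
  X ord0 k * X ord_max m - X ord0 m * X ord_max k.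

Definition minors_dvd n (X : 'M[int]_(2, n)) (c : int) :=
  forall k m, (c %| mxminor2 X k m)%Z.

Definition minors_gcd n (X : 'M[int]_(2, n)) (g : int) :=
  [/\ 0 <= g, minors_dvd X g & forall c, minors_dvd X c -> (c %| g)%Z].

Lemma mxminor2_mull n (L : 'M[int]_2) (X : 'M[int]_(2, n)) k m :
  mxminor2 (L *m X) k m =
  (L ord0 ord0 * L ord_max ord_max - L ord0 ord_max * L ord_max ord0) * mxminor2 X k m.
Proof. by rewrite /mxminor2 !mxE !big_ord2; ring. Qed.

Lemma mxminor2_mulr n p (X : 'M[int]_(2, n)) (V : 'M[int]_(n, p)) k m :
  mxminor2 (X *m V) k m = \sum_i \sum_j mxminor2 X i j * V i k * V j m.
Proof.
rewrite /mxminor2 !mxE [X in _ - X]mulrC mulr_suml [X in _ - X]mulr_suml -sumrB.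
apply: eq_bigr => i _; rewrite mulr_sumr [X in _ - X]mulr_sumr -sumrB.
by apply: eq_bigr => j _; ring.
Qed.

Lemma minors_dvd_mull n (L : 'M[int]_2) (X : 'M[int]_(2, n)) c :
  minors_dvd X c -> minors_dvd (L *m X) c.
Proof. by move=> dvd_c k m; rewrite mxminor2_mull dvdz_mull. Qed.

Lemma minors_dvd_mulr n p (X : 'M[int]_(2, n)) (V : 'M[int]_(n, p)) c :
  minors_dvd X c -> minors_dvd (X *m V) c.
Proof.
move=> dvd_c k m; rewrite mxminor2_mulr.
by apply: rpred_sum => i _; apply: rpred_sum => j _; rewrite -mulrA dvdz_mulr.
Qed.

Definition diag_mx2 n (d : seq int) : 'M[int]_(2, n) :=
  \matrix_(i, j) (d`_i *+ (i == j :> nat)).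

Lemma minors_dvd_diag n (d : seq int) c :
  minors_dvd (diag_mx2 n.+2 d) c <-> (c %| d`_0 * d`_1)%Z.
Proof.
split=> [dvd_c|dvd_c k m].
  by have := dvd_c ord0 (lift ord0 ord0); rewrite /mxminor2 !mxE /= mulr0 subr0 !mulr1n.
rewrite /mxminor2 !mxE; apply: rpredB; rewrite mulrnAl mulrnAr; do 2 apply: rpredMn => //.
Qed.

Lemma minors_gcd_diag n (d : seq int) g :
  minors_gcd (diag_mx2 n.+2 d) g -> g = `|d`_0 * d`_1|%:Z.
Proof.
move=> [g_ge0 dvd_g max_g]; apply: eqz_dvdz_ge0 => //.
  by move/minors_dvd_diag: dvd_g; rewrite dvdzE /= -dvdzE.
rewrite dvdzE /= -dvdzE; apply: max_g; apply/minors_dvd_diag; exact: dvdzz.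
Qed.

Lemma minors_gcd_equiv n (L : 'M[int]_2) (R : 'M[int]_n) (X : 'M[int]_(2, n)) g :
  L \in unitmx -> R \in unitmx -> minors_gcd X g -> minors_gcd (L *m X *m R) g.
Proof.
move=> L_unit R_unit [g_ge0 dvd_g max_g]; split=> // [|c dvd_c].
  exact/minors_dvd_mulr/minors_dvd_mull.
apply: max_g; have -> : X = invmx L *m (L *m X *m R) *m invmx R.
  by rewrite mulmxA mulKmx // mulmxK.
exact/minors_dvd_mulr/minors_dvd_mull.
Qed.

Definition row2 (a b : int) : 'rV[int]_2 := \row_j (if j == ord0 then a else b).

Lemma row2_mulmxE p a b (Y : 'M[int]_(2, p)) k :
  (row2 a b *m Y) ord0 k = a * Y ord0 k + b * Y ord_max k.
Proof. by rewrite mxE big_ord2 !mxE. Qed.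

Section KernelCount.
Variable l' : nat.
Local Notation l := l'.+1.

Definition dvdz_row p (y : 'rV[int]_p) := [forall k, (l%:Z %| y ord0 k)%Z].

Lemma dvdz_row_mulmx p q (y : 'rV[int]_p) (M : 'M[int]_(p, q)) :
  dvdz_row y -> dvdz_row (y *m M).
Proof.
move=> /forallP dvd_y; apply/forallP => k; rewrite mxE.
by apply: rpred_sum => j _; apply: dvdz_mulr.
Qed.

Lemma dvdz_row_unit p (y : 'rV[int]_p) (M : 'M[int]_p) :
  M \in unitmx -> dvdz_row (y *m M) = dvdz_row y.
Proof.
move=> M_unit; apply/idP/idP; last exact: dvdz_row_mulmx.
by move/(dvdz_row_mulmx (invmx M)); rewrite mulmxK.
Qed.

Lemma dvdz_row_diag n (d : seq int) (z : 'rV[int]_2) :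
  dvdz_row (z *m diag_mx2 n.+2 d) =
  (l%:Z %| z ord0 ord0 * d`_0)%Z && (l%:Z %| z ord0 ord_max * d`_1)%Z.
Proof.
apply/idP/andP => [/forallP dvd_z|[dvd_z0 dvd_z1]].
  have := dvd_z ord0; have := dvd_z (lift ord0 ord0).
  by rewrite !mxE !big_ord2 !mxE /= !mulr0n !mulr1n !mulr0 ?addr0 ?add0r => -> ->.
apply/forallP => k; rewrite mxE big_ord2 !mxE.
by apply: rpredD; rewrite mulrnAr; apply: rpredMn.
Qed.

Lemma ord_pair_mulmx_inj (L : 'M[int]_2) : L \in unitmx ->
  injective (fun p : 'I_l * 'I_l =>
    (ord_modz l' ((row2 p.1%:Z p.2%:Z *m L) ord0 ord0),
     ord_modz l' ((row2 p.1%:Z p.2%:Z *m L) ord0 ord_max))).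
Proof.
move=> L_unit [u v] [u' v'] /= [/ord_modz_eq dvd0 /ord_modz_eq dvd1].
have : dvdz_row (row2 (u%:Z - u'%:Z) (v%:Z - v'%:Z) *m L).
  apply/forallP => k; rewrite row2_mulmxE.
  have -> : (u%:Z - u'%:Z) * L ord0 k + (v%:Z - v'%:Z) * L ord_max k =
    (row2 u%:Z v%:Z *m L) ord0 k - (row2 u'%:Z v'%:Z *m L) ord0 k.
    by rewrite !row2_mulmxE; ring.
  by have [->|->] : k = ord0 \/ k = ord_max by case: k => [[|[|]]] // ?; [left|right]; apply: val_inj.
rewrite dvdz_row_unit // => /forallP dvd_uv.
have := dvd_uv ord0; have := dvd_uv ord_max.
by rewrite !mxE /= => /ord_dvdz_eq -> /ord_dvdz_eq ->.
Qed.

Lemma count_kernel_mx2 n (X : 'M[int]_(2, n.+2)) (g : int) :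
  minors_gcd X g -> g != 0 -> (g %| l%:Z)%Z ->
  (\sum_(u < l) \sum_(v < l) (dvdz_row (row2 u%:Z v%:Z *m X) : nat))%N = `|g|%N.
Proof.
move=> gcd_g g_neq0 g_dvd_l.
have [L L_unit [R R_unit [d _ def_X]]] := int_Smith_normal_form X.
rewrite -/(diag_mx2 _ d) in def_X.
have def_g : g = `|d`_0 * d`_1|%:Z.
  apply: (@minors_gcd_diag n).
  have := @minors_gcd_equiv _ (invmx L) (invmx R) X g; rewrite !unitmx_inv.
  by move=> /(_ L_unit R_unit gcd_g); rewrite def_X !mulmxA mulVmx // mul1mx mulmxK.
have d0_neq0 : d`_0 != 0 by move: g_neq0; rewrite def_g; apply: contra => /eqP->; rewrite mul0r.
have d1_neq0 : d`_1 != 0 by move: g_neq0; rewrite def_g; apply: contra => /eqP->; rewrite mulr0.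
have d0_dvd_l : (d`_0 %| l%:Z)%Z.
  by apply: dvdz_trans g_dvd_l; rewrite def_g dvdzE /= -dvdzE dvdz_mulr.
have d1_dvd_l : (d`_1 %| l%:Z)%Z.
  by apply: dvdz_trans g_dvd_l; rewrite def_g dvdzE /= -dvdzE dvdz_mull.
pose G (p : 'I_l * 'I_l) :=
  ((l%:Z %| (p.1%:Z * d`_0)%R)%Z : nat) * ((l%:Z %| (p.2%:Z * d`_1)%R)%Z : nat).
transitivity (\sum_(p : 'I_l * 'I_l) G
    (ord_modz l' ((row2 p.1%:Z p.2%:Z *m L) ord0 ord0),
     ord_modz l' ((row2 p.1%:Z p.2%:Z *m L) ord0 ord_max)))%N.
  rewrite pair_bigA; apply: eq_bigr => -[u v] _ /=.
  rewrite def_X !mulmxA dvdz_row_unit // dvdz_row_diag /G /=.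
  by rewrite -!dvdz_mul_ord_modz -mulnb.
transitivity (\sum_p G p)%N; first by rewrite [RHS](reindex_inj (ord_pair_mulmx_inj L_unit)).
rewrite -(pair_bigA _ (fun u v => G (u, v))) /G /=.
rewrite (eq_bigr (fun u : 'I_l => ((l%:Z %| (u%:Z * d`_0)%R)%Z : nat) *
   \sum_(v < l) ((l%:Z %| (v%:Z * d`_1)%R)%Z : nat))%N); last by move=> u _; rewrite big_distrr.
by rewrite -big_distrl /= !count_dvdz_mul // def_g abszM.
Qed.

End KernelCount.

Definition rows2 (r : 'M[int]_4) (i j : 'I_4) : 'M[int]_(2, 4) :=
  \matrix_(a, k) (if a == ord0 then r i k else r j k).

Lemma mxminor2_rows2 r i j k m : mxminor2 (rows2 r i j) k m = minor2 r i j k m.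
Proof. by rewrite /mxminor2 /minor2 !mxE. Qed.

Lemma minor2_in_zeta_seq r i j (k m : 'I_4) : (k < m)%N ->
  minor2 r i j k m \in [seq minor2 r i j kl.1 kl.2 |
    kl : 'I_4 * 'I_4 <- [seq (k, l) | k <- enum 'I_4, l <- enum 'I_4] & (kl.1 < kl.2)%N].
Proof.
move=> lt_km; apply: (map_f (fun kl : 'I_4 * 'I_4 => minor2 r i j kl.1 kl.2) (x := (k, m))).
by rewrite mem_filter /= lt_km; apply: allpairs_f; rewrite mem_enum.
Qed.

Lemma minors_gcd_zeta r i j : minors_gcd (rows2 r i j) (zeta r i j).
Proof.
split; first exact: foldr_gcdz_ge0.
  move=> k m; rewrite mxminor2_rows2.
  case: (ltngtP k m) => [lt_km|lt_mk|/val_inj ->].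
  - exact/foldr_gcdz_dvd/minor2_in_zeta_seq.
  - have -> : minor2 r i j k m = - minor2 r i j m k by rewrite /minor2; ring.
    by rewrite rpredN; apply/foldr_gcdz_dvd/minor2_in_zeta_seq.
  - by rewrite /minor2 subrr dvdz0.
move=> c dvd_c; apply: dvdz_foldr_gcdz => _ /mapP [[k m] _ ->] /=.
by rewrite -mxminor2_rows2.
Qed.

Lemma Dgcd_dvd (r : 'M[int]_4) i k : (Dgcd r i %| r i k)%Z.
Proof. by apply: foldr_gcdz_dvd; apply: map_f; rewrite mem_enum. Qed.

Lemma lagrange_minor2 (r : 'M[int]_4) i j :
  (\sum_k r i k * r i k) * (\sum_k r j k * r j k) - (\sum_k r i k * r j k) ^+ 2 =
  \sum_(k < 4) \sum_(m < 4 | (k < m)%N) minor2 r i j k m ^+ 2.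
Proof.
under [RHS]eq_bigr => k _ do rewrite big_mkcond /=.
by rewrite !big_ord4 /= /minor2; ring.
Qed.

Section OrthogonalFrame.
Variables (l' : nat) (r : 'M[int]_4).
Local Notation l := l'.+1.
Hypothesis r_orth : forall i j : 'I_4, \sum_(k < 4) r i k * r j k = (i == j)%:R * l%:R.

Lemma Dgcd_neq0_dvd i : Dgcd r i != 0 /\ (Dgcd r i %| l%:Z)%Z.
Proof.
have D2_dvd : (Dgcd r i * Dgcd r i %| l%:Z)%Z.
  have := r_orth i i; rewrite eqxx mul1r natz => <-.
  by apply: rpred_sum => k _; apply: dvdz_mul; apply: Dgcd_dvd.
split; last exact: dvdz_trans (dvdz_mulr _ (dvdzz _)) D2_dvd.
by apply: contraTneq D2_dvd => ->; rewrite mul0r dvd0z.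
Qed.

(* Lagrange's identity turns orthogonality into [l ^ 2 = sum of squared minors]. *)
Lemma zeta_neq0_dvd i j : i != j -> zeta r i j != 0 /\ (zeta r i j %| l%:Z)%Z.
Proof.
move=> i_neq_j; have [_ dvd_minors _] := minors_gcd_zeta r i j.
have z2_dvd : (zeta r i j * zeta r i j %| l%:Z * l%:Z)%Z.
  have := lagrange_minor2 r i j; rewrite !r_orth !eqxx (negbTE i_neq_j).
  rewrite mul1r mul0r expr0n /= subr0 natz => ->.
  apply: rpred_sum => k _; apply: rpred_sum => m _; rewrite expr2.
  by apply: dvdz_mul; rewrite -mxminor2_rows2.
split; last by move: z2_dvd; rewrite !dvdzE !abszM !mulnn dvdn_pexp2r.
by apply: contraTneq z2_dvd => ->; rewrite mul0r dvd0z mulf_eq0 orbb.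
Qed.

Lemma count_row_multiples (i : 'I_4) :
  (\sum_(u < l) ([forall k, (l%:Z %| ((u%:Z + 1) * r i k)%R)%Z] : nat))%N = `|Dgcd r i|%N.
Proof.
have [D_neq0 D_dvd] := Dgcd_neq0_dvd i.
rewrite (sum_ord_periodic_shift (f := fun x => [forall k, (l%:Z %| (x * r i k)%R)%Z] : nat)); last first.
  by congr nat_of_bool; apply: eq_forallb => k; rewrite mul0r dvdz0 dvdz_mulr.
rewrite -(count_dvdz_all (ltn0Sn l') D_neq0 D_dvd); apply: eq_bigr => u _.
congr nat_of_bool; rewrite all_map; apply/forallP/allP => [dvd_all k _|dvd_all k].
  exact: dvd_all.
by apply: dvd_all; rewrite mem_enum.
Qed.

Lemma count_rows2_multiples (i j : 'I_4) : i != j ->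
  (\sum_(u < l) \sum_(v < l)
    ([forall k, (l%:Z %| ((u%:Z + 1) * r i k + (v%:Z + 1) * r j k)%R)%Z] : nat))%N =
  `|zeta r i j|%N.
Proof.
move=> i_neq_j; have [z_neq0 z_dvd] := zeta_neq0_dvd i_neq_j.
rewrite -(count_kernel_mx2 (minors_gcd_zeta r i j) z_neq0 z_dvd).
under eq_bigr => u _.
  rewrite (sum_ord_periodic_shift (f := fun x =>
    [forall k, (l%:Z %| ((u%:Z + 1) * r i k + x * r j k)%R)%Z] : nat)); last first.
    by congr nat_of_bool; apply: eq_forallb => k; rewrite mul0r addr0 rpredDr // dvdz_mulr.
  over.
rewrite (sum_ord_periodic_shift (f := fun x => \sum_(v < l)
    ([forall k, (l%:Z %| (x * r i k + v%:Z * r j k)%R)%Z] : nat))%N); last first.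
  apply: eq_bigr => v _; congr nat_of_bool; apply: eq_forallb => k.
  by rewrite mul0r add0r rpredDl // dvdz_mulr.
apply: eq_bigr => u _; apply: eq_bigr => v _; congr nat_of_bool.
by apply: eq_forallb => k; rewrite row2_mulmxE !mxE.
Qed.

End OrthogonalFrame.

Lemma natr_sum_absz (I : finType) (P : pred I) (F : I -> int) : (forall i, 0 <= F i) ->
  (\sum_(i | P i) `|F i|)%N%:R = (\sum_(i | P i) F i)%:~R :> rat.
Proof.
move=> F_ge0; rewrite natr_sum rmorph_sum; apply: eq_bigr => i _.
by rewrite -[LHS]/((`|F i|%:Z)%:~R) gez0_abs.
Qed.

Section PatternPoly.
Variables (l' : nat) (r : 'M[int]_4).
Local Notation l := l'.+1.
Local Notation Z := {ffun 'I_4 -> option 'I_l}.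

Definition oshift (o : option 'I_l) : int := if o is Some a then a%:Z + 1 else 0.

Definition congr_pattern (z : Z) : bool :=
  [forall k, (l%:Z %| \sum_i oshift (z i) * r i k)%Z].

Definition pattern_poly : {poly rat} :=
  \sum_(z : Z) (congr_pattern z : nat)%:R *: 'X^(osupp_size z).

Lemma coef_pattern_poly k :
  pattern_poly`_k = (\sum_(z : Z) (congr_pattern z : nat) * (osupp_size z == k : nat))%N%:R.
Proof.
rewrite coef_sum natr_sum; apply: eq_bigr => z _.
by rewrite coefZ coefXn natrM eq_sym.
Qed.

Lemma horner_pattern_poly t' :
  pattern_poly.[t'.+1%:R] =
  #|[pred z : {ffun 'I_4 -> option ('I_t'.+1 * 'I_l)} | congr_pattern (ffun_osnd z)]|%:R.
Proof.
rewrite -sum1_card big_mkcond /=.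
rewrite (eq_bigr (fun z => (congr_pattern (ffun_osnd z) : nat))); last first.
  by move=> z _; rewrite inE; case: (congr_pattern _).
rewrite (@sum_ffun_osnd _ 'I_t'.+1 _ (fun z : Z => (congr_pattern z : nat))) natr_sum horner_sum.
apply: eq_bigr => z _.
by rewrite hornerZ hornerXn natrM natrX card_ord.
Qed.

Lemma congr_pattern_single i a :
  congr_pattern (ffun_single i a) = [forall k, (l%:Z %| ((a%:Z + 1) * r i k)%R)%Z].
Proof.
apply: eq_forallb => k; rewrite (bigD1 i) //= big1 ?addr0; first by rewrite ffunE eqxx.
by move=> m m_neq_i; rewrite ffunE (negbTE m_neq_i) mul0r.
Qed.

Lemma congr_pattern_pair i j a b : i != j -> congr_pattern (ffun_pair i j a b) =
  [forall k, (l%:Z %| ((a%:Z + 1) * r i k + (b%:Z + 1) * r j k)%R)%Z].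
Proof.
move=> i_neq_j; apply: eq_forallb => k.
rewrite (bigD1 i) //= (bigD1 j) /=; last by rewrite eq_sym.
rewrite big1 ?addr0; first by rewrite !ffunE eqxx eq_sym (negbTE i_neq_j) eqxx.
by move=> m /andP[m_neq_i m_neq_j]; rewrite ffunE (negbTE m_neq_i) (negbTE m_neq_j) mul0r.
Qed.

Hypothesis r_orth : forall i j : 'I_4, \sum_(k < 4) r i k * r j k = (i == j)%:R * l%:R.

Lemma coef1_pattern_poly : pattern_poly`_1 = (\sum_i Dgcd r i)%:~R.
Proof.
rewrite coef_pattern_poly (sum_osupp_size_eq1 (fun z => congr_pattern z : nat)).
rewrite -natr_sum_absz => [|i]; last exact: foldr_gcdz_ge0.
congr _%:R; apply: eq_bigr => i _; rewrite -(count_row_multiples r_orth i).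
by apply: eq_bigr => a _; rewrite congr_pattern_single.
Qed.

Lemma coef2_pattern_poly :
  pattern_poly`_2 = (\sum_(i < 4) \sum_(j < 4 | (i < j)%N) zeta r i j)%:~R.
Proof.
rewrite coef_pattern_poly (sum_osupp_size_eq2 (fun z => congr_pattern z : nat)).
rewrite [RHS]rmorph_sum /=.
rewrite (eq_bigr (fun i : 'I_4 => (\sum_(j < 4 | (i < j)%N) `|zeta r i j|)%N%:R : rat)); last first.
  by move=> i _; rewrite natr_sum_absz // => j; apply: foldr_gcdz_ge0.
rewrite -natr_sum; congr _%:R; apply: eq_bigr => i _; apply: eq_bigr => j lt_ij.
have i_neq_j : i != j by rewrite neq_ltn lt_ij.
rewrite -(count_rows2_multiples r_orth i_neq_j).
by apply: eq_bigr => a _; apply: eq_bigr => b _; rewrite congr_pattern_pair.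
Qed.

End PatternPoly.

Section Digits.
Variables (t' l' : nat).
Local Notation t := t'.+1.
Local Notation l := l'.+1.

(* With [digits_of] as inverse, a bijection onto the integers of [0, t * l]. *)
Definition digits_val (o : option ('I_t * 'I_l)) : int :=
  if o is Some p then (p.1 * l + p.2 + 1)%N%:Z else 0.

Definition digits_of (y : int) : option ('I_t * 'I_l) :=
  if y is Posz n.+1 then Some (inord (n %/ l), inord (n %% l)) else None.

Lemma digits_val_inj : injective digits_val.
Proof.
move=> [[q a]|] [[q' a']|] //= [eq_val]; try by rewrite addn1 in eq_val.
move/addIn: eq_val => eq_val.
have eq_q : (q : nat) = q'.
  by have := congr1 (divn^~ l) eq_val; rewrite /= !divnMDl // !divn_small ?addn0.
have eq_a : (a : nat) = a'.
  by have := congr1 (modn^~ l) eq_val; rewrite /= !modnMDl !modn_small.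
by congr (Some (_, _)); apply: val_inj.
Qed.

Lemma digits_val_range o : 0 <= digits_val o <= (t * l)%N%:Z.
Proof.
case: o => [[q a]|] //=; rewrite !lez_nat /= -addnA addn1.
apply: (@leq_trans (q * l + l)); first by rewrite leq_add2l.
by rewrite addnC -mulSn leq_mul2r ltn_ord orbT.
Qed.

Lemma digits_ofK y : 0 <= y <= (t * l)%N%:Z -> digits_val (digits_of y) = y.
Proof.
case: y => [[|n]|] //= n_le.
have lt_q : (n %/ l < t)%N by rewrite ltn_divLR.
by rewrite /= !inordK ?ltn_mod // -divn_eq addn1.
Qed.

Lemma digits_val_mod o : digits_val o = oshift (omap snd o) +
  l%:Z * (if o is Some p then (p.1 : nat)%:Z else 0).
Proof. by case: o => [[q a]|] /=; rewrite ?mulr0 ?addr0 // !PoszD PoszM; ring. Qed.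

End Digits.

Lemma sum_mul_delta (R : comPzRingType) n (c : 'I_n -> R) (a : R) k :
  \sum_m c m * ((m == k)%:R * a) = a * c k.
Proof.
rewrite (bigD1 k) //= big1 ?addr0 => [|m /negbTE->]; first by rewrite eqxx mul1r mulrC.
by rewrite mul0r mulr0.
Qed.

Section LatticePoints.
Variables (l' : nat) (r : 'M[int]_4).
Local Notation l := l'.+1.
Hypothesis r_orth : forall i j : 'I_4, \sum_(k < 4) r i k * r j k = (i == j)%:R * l%:R.

(* Over [rat], [r *m r^T = l] makes [r^T / l] a right, hence left, inverse of [r]. *)
Lemma orth_cols k m : \sum_(i < 4) r i k * r i m = (k == m)%:R * l%:R.
Proof.
pose N : 'M[rat]_4 := map_mx (fun z : int => z%:~R : rat) r.
have l_neq0 : l%:R != 0 :> rat by rewrite pnatr_eq0.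
have N_orth : N *m N^T = l%:R%:M.
  apply/matrixP => i j; rewrite !mxE.
  have := congr1 (fun z : int => z%:~R : rat) (r_orth i j).
  rewrite rmorph_sum rmorphM /= !rmorph_nat mulr_natl => <-.
  by apply: eq_bigr => k' _; rewrite !mxE rmorphM.
have NtN : N^T *m N = l%:R%:M.
  have N_inv : N *m ((l%:R)^-1 *: N^T) = 1%:M.
    by rewrite -scalemxAr N_orth scale_scalar_mx mulVf.
  have := mulmx1C N_inv; rewrite -scalemxAl => /(congr1 (fun A => l%:R *: A)).
  by rewrite scalerA mulfV // scale1r scalemx1.
apply: (@intr_inj rat); rewrite rmorph_sum rmorphM /= !rmorph_nat mulr_natl.
have := congr1 (fun A : 'M[rat]_4 => A k m) NtN; rewrite !mxE => <-.
by apply: eq_bigr => i _; rewrite !mxE rmorphM.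
Qed.

Definition frame_coords (x : 'rV[int]_4) (i : 'I_4) : int := \sum_k x ord0 k * r i k.

Lemma frame_coordsK x k : \sum_i frame_coords x i * r i k = l%:Z * x ord0 k.
Proof.
under eq_bigr => i _ do rewrite /frame_coords mulr_suml.
rewrite exchange_big /=; under eq_bigr => m _ do under eq_bigr do rewrite -mulrA.
by under eq_bigr => m _ do rewrite -mulr_sumr orth_cols; rewrite sum_mul_delta natz.
Qed.

Variable t' : nat.
Local Notation t := t'.+1.
Local Notation Zt := {ffun 'I_4 -> option ('I_t * 'I_l)}.

Definition point_of_digits (z : Zt) : 'rV[int]_4 :=
  \row_k ((\sum_i digits_val (z i) * r i k) %/ l%:Z)%Z.

Lemma congr_pattern_digits (z : Zt) : congr_pattern r (ffun_osnd z) =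
  [forall k, (l%:Z %| \sum_i digits_val (z i) * r i k)%Z].
Proof.
apply: eq_forallb => k.
have -> : \sum_i digits_val (z i) * r i k = \sum_i oshift (ffun_osnd z i) * r i k +
    l%:Z * \sum_i (if z i is Some p then (p.1 : nat)%:Z else 0) * r i k.
  rewrite mulr_sumr -big_split; apply: eq_bigr => i _.
  by rewrite digits_val_mod ffunE mulrDl mulrA.
by rewrite rpredDr // dvdz_mulr.
Qed.

Lemma frame_coords_point (z : Zt) i : congr_pattern r (ffun_osnd z) ->
  frame_coords (point_of_digits z) i = digits_val (z i).
Proof.
rewrite congr_pattern_digits => /forallP dvd_z; apply: (@mulfI _ l%:Z) => //.
rewrite /frame_coords mulr_sumr.
under eq_bigr => k _ do rewrite mulrA mxE [l%:Z * _]mulrC divzK // mulr_suml.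
rewrite exchange_big /=; under eq_bigr => j _ do under eq_bigr do rewrite -mulrA.
by under eq_bigr => j _ do rewrite -mulr_sumr r_orth; rewrite sum_mul_delta natz.
Qed.

Lemma point_of_digitsP x :
  (exists2 z, congr_pattern r (ffun_osnd z) & point_of_digits z = x) <->
  (forall i, 0 <= frame_coords x i <= (t * l)%N%:Z).
Proof.
split=> [[z z_congr <-] i|x_range]; first by rewrite frame_coords_point ?digits_val_range.
pose z : Zt := [ffun i => digits_of t' l' (frame_coords x i)].
have sum_z k : \sum_i digits_val (z i) * r i k = l%:Z * x ord0 k.
  by under eq_bigr => i _ do rewrite ffunE digits_ofK //; rewrite frame_coordsK.
have z_congr : congr_pattern r (ffun_osnd z).
  by rewrite congr_pattern_digits; apply/forallP => k; rewrite sum_z dvdz_mulr.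
by exists z => //; apply/rowP => k; rewrite mxE sum_z mulrC mulzK.
Qed.

Lemma has_card_frame_box (P : 'rV[int]_4 -> Prop) n :
  (forall x, P x <-> forall i, 0 <= frame_coords x i <= (t * l)%N%:Z) ->
  has_card P n -> n = #|[pred z : Zt | congr_pattern r (ffun_osnd z)]|.
Proof.
move=> P_box [s [s_uniq [s_P <-]]].
pose S := [seq point_of_digits z | z <- enum [pred z : Zt | congr_pattern r (ffun_osnd z)]].
have S_uniq : uniq S.
  rewrite map_inj_in_uniq ?enum_uniq // => z1 z2; rewrite !mem_enum !inE => z1_congr z2_congr eq_z.
  apply/ffunP => i; apply: (@digits_val_inj t' l').
  by rewrite -!frame_coords_point // eq_z.
rewrite cardE -(size_map point_of_digits); apply: perm_size; apply: uniq_perm => // x.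
apply/idP/mapP => [/s_P/P_box/point_of_digitsP [z z_congr <-]|[z]].
  by exists z; rewrite ?mem_enum.
by rewrite mem_enum => z_congr ->; apply/s_P/P_box/point_of_digitsP; exists z.
Qed.

Section RealCoefficients.
Variable R : realType.

Lemma orth_rows_real i j : \sum_k (r j k)%:~R * (r i k)%:~R = (j == i)%:R * l%:R :> R.
Proof.
have := congr1 (fun z : int => z%:~R : R) (r_orth j i).
by rewrite rmorph_sum rmorphM /= !rmorph_nat => <-; apply: eq_bigr => k _; rewrite rmorphM.
Qed.

Lemma frame_coords_combination (s : 'I_4 -> R) (c : R) (x : 'rV[int]_4) :
  (forall k, (x ord0 k)%:~R = c * \sum_i s i * (r i k)%:~R) ->
  forall i, (frame_coords x i)%:~R = c * l%:R * s i.
Proof.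
move=> x_comb i; rewrite rmorph_sum /=.
under eq_bigr => k _ do rewrite rmorphM /= x_comb -mulrA mulr_suml.
rewrite -mulr_sumr exchange_big /=.
under eq_bigr => j _ do under eq_bigr do rewrite -mulrA.
under eq_bigr => j _ do rewrite -mulr_sumr orth_rows_real.
by rewrite sum_mul_delta mulrA.
Qed.

Lemma in_dilate_frame_coords (x : 'rV[int]_4) :
  in_dilate R r t x <-> (forall i, 0 <= frame_coords x i <= (t * l)%N%:Z).
Proof.
have tl_gt0 : 0 < t%:R * l%:R :> R by rewrite mulr_gt0 ?ltr0Sn.
split=> [[s [s01 x_comb]] i|x_box].
  have /andP [s_ge0 s_le1] := s01 i.
  rewrite -!(ler_int R) (frame_coords_combination x_comb) PoszM rmorphM /=.
  by rewrite mulr_ge0 ?(ltW tl_gt0) //= -[X in _ <= X]mulr1 ler_wpM2l ?(ltW tl_gt0).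
exists (fun i => (frame_coords x i)%:~R / (t%:R * l%:R)); split=> [i|k].
  have /andP [c_ge0 c_le] := x_box i.
  rewrite divr_ge0 ?ler0z ?(ltW tl_gt0) //= ler_pdivrMr // mul1r.
  by move: c_le; rewrite -(ler_int R) PoszM rmorphM.
have := congr1 (fun z : int => z%:~R : R) (frame_coordsK x k).
rewrite rmorph_sum rmorphM /= => sum_eq.
under eq_bigr do rewrite mulrAC -rmorphM.
by rewrite -mulr_suml sum_eq; field; rewrite !nat1r !pnatr_eq0.
Qed.

End RealCoefficients.

End LatticePoints.

Lemma poly_eq_on_pos_nat (R : numDomainType) (p q : {poly R}) :
  (forall t', p.[t'.+1%:R] = q.[t'.+1%:R]) -> p = q.
Proof.
move=> eq_pq; apply/eqP; rewrite -subr_eq0; apply: contraT => pq_neq0.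
pose roots := [seq i.+1%:R : R | i <- iota 0 (size (p - q))].
have roots_pq : all (root (p - q)) roots.
  by apply/allP => _ /mapP [i _ ->]; rewrite /root !hornerE eq_pq subrr.
have roots_uniq : uniq roots.
  by rewrite map_inj_uniq ?iota_uniq // => i j /eqP; rewrite eqr_nat => /eqP [].
by have := max_poly_roots pq_neq0 roots_pq roots_uniq; rewrite size_map size_iota ltnn.
Qed.

Unset Implicit Arguments.

Theorem theorem2p17 (R : realType) (l : nat) (r : 'M[int]_4) (E : {poly rat}) :
  (0 < l)%N ->
  (forall i j : 'I_4, \sum_(k < 4) r i k * r j k = (i == j)%:R * l%:R) ->
  foldr gcdz 0 [seq Dgcd r i | i <- enum 'I_4] = 1 ->
  (forall t : nat, (0 < t)%N ->
     exists n : nat, has_card (in_dilate R r t) n /\ E.[t%:R] = n%:R) ->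
  E`_2 = E`_1
         + (\sum_(i < 4) \sum_(j < 4 | (i < j)%N) zeta r i j)%:~R
         - (\sum_(i < 4) Dgcd r i)%:~R.
Proof.
case: l => // l' _ r_orth _ E_ehrhart.
have -> : E = pattern_poly l' r.
  apply: poly_eq_on_pos_nat => t'.
  have [n [card_n ->]] := E_ehrhart t'.+1 isT.
  rewrite horner_pattern_poly; congr _%:R.
  exact: has_card_frame_box r_orth _ _ _ (in_dilate_frame_coords r_orth t' R) card_n.
by rewrite coef2_pattern_poly // coef1_pattern_poly // addrAC subrr add0r.
Qed.
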